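(* (i) For all $a,\ell>0$: $\kappa\in(0,1)$, $$r_0(a,\ell)\approx\frac{\ell}{\langle a\sqrt\ell\rangle},\quad\kappa(a,\ell)\approx\langle a\sqrt\ell\rangle^{-1},\quad p(a,\ell)\approx\frac1{a^2}\langle a\sqrt\ell\rangle,\quad\frac1{1-\kappa}\approx\Big\langle\frac1{a^2\ell}\Big\rangle,\quad a\ell\kappa^2\approx\min\Big\{a\ell,\frac1a\Big\}.$$ (ii) For all $(\theta,a,\ell)\in\mathbb R\times(0,\infty)^2$, with $R=R(\theta,a,\ell)$: $$R\ge r_0=p(1-\kappa),\qquad\frac Rp+\kappa\approx\Big\langle\frac Rp\Big\rangle,\qquad\Big|\frac Rp+\kappa-\frac{|\theta|}{p}\Big|\lesssim\ln\Big\langle\frac Rp\Big\rangle,\qquad|\theta|\lesssim R\lesssim p+|\theta|.$$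
   Context: Fix $m>0$. For $a,\ell>0$: $\kappa(a,\ell)=(1+4a^2\ell/m^2)^{-1/2}$, $p(a,\ell)=\frac{m}{2a^2\kappa(a,\ell)}$, $r_0(a,\ell)=\frac{m}{2a^2}\big(\sqrt{1+4a^2\ell/m^2}-1\big)$. For $\kappa\in(0,1)$, $G_\kappa(x)=\sqrt{x^2-1}-\kappa\ln(x+\sqrt{x^2-1})$ on $[1,\infty)$, $H_\kappa=G_\kappa^{-1}:[0,\infty)\to[1,\infty)$, and $R(\theta,a,\ell)=pH_\kappa(|\theta|/p)-p\kappa$. $\langle x\rangle=(2+|x|^2)^{1/2}$. $A\lesssim B$ means $A\le CB$ with $C$ independent of $\theta,a,\ell$ (possibly depending on $m$); $A\approx B$ means $A\lesssim B$ and $B\lesssim A$. *)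

From Stdlib Require Import Reals Lra ClassicalEpsilon.
Open Scope R_scope.

Definition kappa (m a l : R) : R := / sqrt (1 + 4 * a^2 * l / m^2).

Definition pp (m a l : R) : R := m / (2 * a^2 * kappa m a l).

Definition r0 (m a l : R) : R :=
  m / (2 * a^2) * (sqrt (1 + 4 * a^2 * l / m^2) - 1).

Definition Gk (k x : R) : R := sqrt (x^2 - 1) - k * ln (x + sqrt (x^2 - 1)).

(* H_kappa = G_kappa^{-1} : [0,oo) -> [1,oo): H_kappa y is the (unique,
   for kappa in (0,1) and y >= 0) x >= 1 with G_kappa x = y. *)
Definition Hk (k y : R) : R :=
  epsilon (inhabits 1) (fun x => 1 <= x /\ Gk k x = y).

Definition RR (m theta a l : R) : R :=
  pp m a l * Hk (kappa m a l) (Rabs theta / pp m a l) - pp m a l * kappa m a l.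

(* Japanese bracket <x> = (2 + |x|^2)^(1/2) *)
Definition jb (x : R) : R := sqrt (2 + x^2).

Definition approx (C A B : R) : Prop := A <= C * B /\ B <= C * A.

From Stdlib Require Import Reals Lra Psatz ClassicalEpsilon.
Open Scope R_scope.

(* Put s := sqrt (1 + 4 a^2 l / m^2) and u := a^2 l.  Then kappa = 1/s,
   p = m s / (2 a^2), r_0 = 2 l / (m (s + 1)), 1/(1 - kappa) = s (s + 1) m^2 / (4 u)
   and a l kappa^2 = a l / s^2, while s^2 = 1 + (4/m^2) u is comparable both to
   2 + u = <a sqrt l>^2 and to max(1, u); this gives part (i).
   For part (ii) write H_kappa(y) = cosh t with t >= 0, so that y = sinh t - kappa t
   and R/p = cosh t - kappa.  Then cosh t - y = e^{-t} + kappa t lies in [0, 1 + t],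
   where t <= ln (2 cosh t) is logarithmic in <R/p> and t <= 8 (1 + y). *)

Lemma ln_le (x y : R) : 0 < x -> x <= y -> ln x <= ln y.
Proof. intros hx [hxy | <-]; [left; apply ln_increasing |]; lra. Qed.

Lemma ln_nonneg (x : R) : 1 <= x -> 0 <= ln x.
Proof. intros hx. rewrite <- ln_1. apply ln_le; lra. Qed.

Lemma le_of_sqr_le (x y : R) : 0 <= y -> x * x <= y * y -> x <= y.
Proof. intros hy h. apply Rsqr_incr_0_var; [unfold Rsqr; lra | exact hy]. Qed.

Lemma approx_le (C C' A B : R) :
  0 <= A -> 0 <= B -> C <= C' -> approx C A B -> approx C' A B.
Proof. intros hA hB hC [h1 h2]; split; nra. Qed.

Lemma approx_trans (C1 C2 A B D : R) : 0 <= C1 -> 0 <= C2 ->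
  approx C1 A B -> approx C2 B D -> approx (C1 * C2) A D.
Proof. intros h1 h2 [hAB hBA] [hBD hDB]; split; nra. Qed.

Lemma approx_scale (C c A B : R) : 0 <= c -> approx C A B -> approx C (c * A) (c * B).
Proof. intros hc [h1 h2]; split; nra. Qed.

Lemma approx_inv (C A B : R) : 0 < A -> 0 < B -> approx C A B -> approx C (/ A) (/ B).
Proof.
  intros hA hB [h1 h2].
  assert (hiA : / A * A = 1) by (field; lra).
  assert (hiB : / B * B = 1) by (field; lra).
  assert (0 < / A) by (apply Rinv_0_lt_compat; lra).
  assert (0 < / B) by (apply Rinv_0_lt_compat; lra).
  split.
  - apply Rle_trans with (/ A * / B * B); [right; field; lra|].
    apply Rle_trans with (/ A * / B * (C * A)); [apply Rmult_le_compat_l; nra|].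
    right; field; lra.
  - apply Rle_trans with (/ A * / B * A); [right; field; lra|].
    apply Rle_trans with (/ A * / B * (C * B)); [apply Rmult_le_compat_l; nra|].
    right; field; lra.
Qed.

Lemma approx_sqrt (C A B : R) : 0 <= A -> 0 <= B -> 1 <= C ->
  approx C A B -> approx C (sqrt A) (sqrt B).
Proof.
  intros hA hB hC [h1 h2].
  assert (hsC : sqrt C <= C).
  { apply le_of_sqr_le; [lra|]. rewrite sqrt_sqrt; nra. }
  assert (hmono : forall X Y, 0 <= Y -> X <= C * Y -> sqrt X <= C * sqrt Y).
  { intros X Y hY hXY. apply Rle_trans with (sqrt C * sqrt Y).
    - rewrite <- sqrt_mult by lra. apply sqrt_le_1_alt; exact hXY.
    - apply Rmult_le_compat_r; [apply sqrt_pos | exact hsC]. }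
  split; apply hmono; assumption.
Qed.

Lemma approx_mul_const (c A : R) : 0 < c -> 0 <= A -> approx (c + / c) (c * A) A.
Proof.
  intros hc hA. assert (c * / c = 1) by (field; lra).
  assert (0 < / c) by (apply Rinv_0_lt_compat; lra). split; nra.
Qed.

Lemma jb_sqr (x : R) : jb x * jb x = 2 + x ^ 2.
Proof. apply sqrt_sqrt. nra. Qed.

Lemma jb_nonneg (x : R) : 0 <= jb x.
Proof. apply sqrt_pos. Qed.

Lemma approx_two_add_jb (x : R) : 0 <= x -> approx 3 (2 + x) (jb x).
Proof.
  intros hx. pose proof (jb_sqr x). pose proof (jb_nonneg x).
  pose proof (pow2_ge_0 (x - 1)).
  split; apply le_of_sqr_le; nra.
Qed.

Lemma one_le_jb (x : R) : 1 <= jb x.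
Proof. apply le_of_sqr_le; [apply jb_nonneg|]. rewrite jb_sqr. nra. Qed.

Lemma abs_le_jb (x : R) : Rabs x <= jb x.
Proof.
  apply le_of_sqr_le; [apply jb_nonneg|]. rewrite jb_sqr, <- Rabs_mult, Rabs_pos_eq; nra.
Qed.

Lemma approx_jb_sub (k x : R) : 0 <= k <= 1 -> 1 <= x -> approx 2 x (jb (x - k)).
Proof.
  intros hk hx. pose proof (jb_sqr (x - k)). pose proof (one_le_jb (x - k)).
  pose proof (abs_le_jb (x - k)). rewrite Rabs_pos_eq in * by lra.
  split; [lra | apply le_of_sqr_le; nra].
Qed.

Lemma ln_two_le_ln_jb (x : R) : ln 2 <= 2 * ln (jb x).
Proof.
  pose proof (one_le_jb x).
  replace (2 * ln (jb x)) with (ln (jb x * jb x)) by (rewrite ln_mult; lra).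
  apply ln_le; [lra|]. rewrite jb_sqr. nra.
Qed.

Lemma approx_one_add_mul (c x : R) : 0 < c -> 0 <= x ->
  approx (2 + c + / c) (1 + c * x) (2 + x).
Proof.
  intros hc hx. assert (c * / c = 1) by (field; lra).
  assert (0 < / c) by (apply Rinv_0_lt_compat; lra). split; nra.
Qed.

Lemma approx_div_one_add_mul_min (c x u : R) : 0 < c -> 0 < x -> 0 < u ->
  approx (1 + c + / c) (x / (1 + c * u)) (Rmin x (x / u)).
Proof.
  intros hc hx hu.
  assert (hw : / (1 + c * u) * (1 + c * u) = 1) by (field; nra).
  assert (hv : / u * u = 1) by (field; lra).
  assert (hic : / c * c = 1) by (field; lra).
  assert (0 < / (1 + c * u)) by (apply Rinv_0_lt_compat; nra).
  assert (0 < / u) by (apply Rinv_0_lt_compat; lra).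
  assert (0 < / c) by (apply Rinv_0_lt_compat; lra).
  set (w := / (1 + c * u)) in *.
  assert (hcuw : 0 <= c * u * w) by (apply Rmult_le_pos; nra).
  assert (w <= 1) by nra.
  assert (w <= / c * / u).
  { replace w with (/ c * / u * (c * u * w)) by (field; lra).
    assert (0 < / c * / u) by nra.
    nra. }
  unfold Rdiv, Rmin. destruct (Rle_dec x (x * / u)) as [hle | hlt].
  - assert (u <= 1) by nra. assert (1 <= (1 + c) * w) by nra.
    rewrite <- (Rmult_1_r x) at 2. apply approx_scale; [lra|]. split; fold w; nra.
  - assert (1 < u) by nra. assert (/ u <= (1 + c) * w) by nra.
    apply approx_scale; [lra|]. split; fold w; nra.
Qed.

Lemma exp_mul_exp_opp (t : R) : exp t * exp (- t) = 1.
Proof. rewrite <- exp_plus, Rplus_opp_r. apply exp_0. Qed.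

Lemma exp_opp_le_1 (t : R) : 0 <= t -> exp (- t) <= 1.
Proof.
  intros ht. pose proof (exp_mul_exp_opp t). pose proof (exp_ineq1_le t).
  pose proof (exp_pos (- t)). nra.
Qed.

Lemma cosh_sub_sinh (t : R) : cosh t - sinh t = exp (- t).
Proof. unfold cosh, sinh. field. Qed.

Lemma one_le_cosh (t : R) : 1 <= cosh t.
Proof.
  unfold cosh. pose proof (exp_mul_exp_opp t). pose proof (exp_pos t).
  pose proof (exp_pos (- t)).
  assert (0 <= exp (- t) * (exp t - 1) ^ 2) by (apply Rmult_le_pos; [lra | apply pow2_ge_0]).
  nra.
Qed.

Lemma sinh_lower (t : R) : 0 <= t -> t / 2 + t ^ 2 / 8 <= sinh t.
Proof.
  intros ht. unfold sinh.
  assert (hsq : exp t = exp (t / 2) * exp (t / 2)) by (rewrite <- exp_plus; f_equal; field).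
  pose proof (exp_ineq1_le (t / 2)).
  pose proof (exp_opp_le_1 t ht).
  nra.
Qed.

Lemma Gk_cosh (k t : R) : 0 <= t -> Gk k (cosh t) = sinh t - k * t.
Proof.
  intros ht. unfold Gk.
  assert (hsinh : 0 <= sinh t) by (pose proof (sinh_lower t ht); nra).
  replace (cosh t ^ 2 - 1) with (sinh t ^ 2)
    by (pose proof (exp_mul_exp_opp t); unfold cosh, sinh; nra).
  rewrite sqrt_pow2 by exact hsinh.
  replace (cosh t + sinh t) with (exp t) by (unfold cosh, sinh; field).
  now rewrite ln_exp.
Qed.

Lemma cosh_surj (x : R) : 1 <= x -> exists t, 0 <= t /\ cosh t = x.
Proof.
  intros hx.
  set (q := sqrt (x ^ 2 - 1)).
  assert (hq : q * q = x ^ 2 - 1) by (apply sqrt_sqrt; nra).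
  assert (hq0 : 0 <= q) by apply sqrt_pos.
  exists (ln (x + q)). split; [apply ln_nonneg; lra|].
  unfold cosh. rewrite exp_Ropp, exp_ln by lra.
  replace (/ (x + q)) with (x - q) by (field_simplify_eq; nra).
  field.
Qed.

Lemma sinh_sub_mul_surj (k y : R) : 0 <= k <= 1 -> 0 <= y ->
  exists t, 0 <= t /\ sinh t - k * t = y.
Proof.
  intros hk hy.
  set (f := fun t => sinh t - k * t - y).
  assert (hf : continuity f).
  { apply continuity_minus; [apply continuity_minus|].
    - apply derivable_continuous, derivable_sinh.
    - apply continuity_scal, derivable_continuous, derivable_id.
    - apply continuity_const. now intros ? ?. }
  set (T := 4 + 4 * y).
  assert (hfT : 0 <= f T) by (pose proof (sinh_lower T); unfold f, T in *; nra).
  assert (hf0 : f 0 = - y) by (unfold f, sinh; rewrite Ropp_0, exp_0; lra).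
  destruct (IVT_cor f 0 T hf) as [t [ht hft]]; [unfold T; lra | rewrite hf0; nra |].
  exists t. split; [lra|]. unfold f in hft. lra.
Qed.

Lemma Hk_spec (k y : R) : 0 <= k <= 1 -> 0 <= y -> 1 <= Hk k y /\ Gk k (Hk k y) = y.
Proof.
  intros hk hy. unfold Hk. apply epsilon_spec.
  destruct (sinh_sub_mul_surj k y hk hy) as [t [ht hty]].
  exists (cosh t). split; [apply one_le_cosh | now rewrite Gk_cosh].
Qed.

Lemma Hk_cosh (k y : R) : 0 <= k <= 1 -> 0 <= y ->
  exists t, 0 <= t /\ Hk k y = cosh t /\ y = sinh t - k * t.
Proof.
  intros hk hy. destruct (Hk_spec k y hk hy) as [hx hG].
  destruct (cosh_surj _ hx) as [t [ht hxt]].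
  exists t. rewrite <- hxt in hG. rewrite Gk_cosh in hG by exact ht. auto.
Qed.

Section CoshEstimates.
Variables k t : R.
Hypotheses (hk : 0 <= k <= 1) (ht : 0 <= t).

Lemma cosh_sub_Gk_bounds : 0 <= cosh t - (sinh t - k * t) <= 1 + t.
Proof.
  pose proof (cosh_sub_sinh t). pose proof (exp_pos (- t)).
  pose proof (exp_opp_le_1 t ht). nra.
Qed.

Lemma sinh_sub_mul_le : sinh t - k * t <= cosh t - k.
Proof.
  pose proof (cosh_sub_sinh t). pose proof (exp_pos (- t)).
  pose proof (exp_ineq1_le (- t)). nra.
Qed.

Lemma le_ln_two_cosh : t <= ln (2 * cosh t).
Proof.
  rewrite <- (ln_exp t) at 1. apply ln_le; [apply exp_pos|].
  pose proof (exp_pos (- t)). unfold cosh. lra.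
Qed.

Lemma le_sinh_sub : t <= 8 * (1 + (sinh t - t)).
Proof. pose proof (sinh_lower t ht). pose proof (pow2_ge_0 (t - 5 / 2)). nra. Qed.

End CoshEstimates.

Lemma Hk_estimates (k y : R) : 0 <= k <= 1 -> 0 <= y ->
  let x := Hk k y in
  1 <= x /\ approx 2 x (jb (x - k)) /\ Rabs (x - y) <= 9 * ln (jb (x - k)) /\
  y <= x - k /\ x - k <= 9 * (1 + y).
Proof.
  intros hk hy x.
  destruct (Hk_cosh k y hk hy) as [t [ht [hx hyt]]]. fold x in hx.
  pose proof (one_le_cosh t) as hx1. rewrite <- hx in hx1.
  pose proof (cosh_sub_Gk_bounds k t hk ht) as hgap. rewrite <- hx, <- hyt in hgap.
  pose proof (approx_jb_sub k x hk hx1) as hJ.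
  set (J := jb (x - k)) in hJ |- *.
  assert (hlnJ : 1 + t <= 9 * ln J).
  { pose proof (le_ln_two_cosh t) as hlt. rewrite <- hx in hlt.
    assert (ln (2 * x) <= 2 * ln 2 + ln J).
    { pose proof (one_le_jb (x - k)). destruct hJ as [hxJ _].
      replace (2 * ln 2 + ln J) with (ln (2 * 2 * J)) by (rewrite !ln_mult; lra).
      apply ln_le; lra. }
    pose proof (ln_two_le_ln_jb (x - k)) as hln2. fold J in hln2. pose proof ln_lt_2. lra. }
  split; [exact hx1|]. split; [exact hJ|]. split; [|split].
  - rewrite Rabs_pos_eq; lra.
  - rewrite hyt, hx. apply sinh_sub_mul_le; assumption.
  - pose proof (le_sinh_sub t ht). nra.
Qed.

Section Scales.
Variables m a l : R.
Hypotheses (hm : 0 < m) (ha : 0 < a) (hl : 0 < l).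

Let c := 4 / m ^ 2.
Let u := a ^ 2 * l.
Let s := sqrt (1 + 4 * a ^ 2 * l / m ^ 2).

Let c_pos : 0 < c.
Proof. unfold c. apply Rdiv_lt_0_compat; [lra | apply pow_lt; lra]. Qed.

Let a2_pos : 0 < a ^ 2.
Proof. apply pow_lt; lra. Qed.

Let u_pos : 0 < u.
Proof. unfold u. pose proof a2_pos. apply Rmult_lt_0_compat; lra. Qed.

Let s_eq : s = sqrt (1 + c * u).
Proof. unfold s, c, u. f_equal. field. lra. Qed.

Lemma s_sqr : s * s = 1 + c * u.
Proof. rewrite s_eq. apply sqrt_sqrt. pose proof c_pos; pose proof u_pos; nra. Qed.

Lemma one_lt_s : 1 < s.
Proof.
  pose proof s_sqr. pose proof c_pos; pose proof u_pos.
  assert (0 <= s) by apply sqrt_pos. nra.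
Qed.

Lemma s_approx_jb : approx (2 + c + / c) s (jb (a * sqrt l)).
Proof.
  assert (hx : (a * sqrt l) ^ 2 = u).
  { unfold u. rewrite Rpow_mult_distr, pow2_sqrt; lra. }
  unfold jb. rewrite hx, s_eq.
  pose proof c_pos; pose proof u_pos.
  apply approx_sqrt; try nra.
  - assert (c * / c = 1) by (field; lra). assert (0 < / c) by (apply Rinv_0_lt_compat; lra). nra.
  - apply approx_one_add_mul; lra.
Qed.

Lemma kappa_eq : kappa m a l = / s.
Proof. reflexivity. Qed.

Lemma kappa_bounds : 0 < kappa m a l < 1.
Proof.
  rewrite kappa_eq. pose proof one_lt_s.
  split; [apply Rinv_0_lt_compat; lra|].
  rewrite <- Rinv_1. apply Rinv_lt_contravar; lra.
Qed.

Lemma kappa_approx : approx (2 + c + / c) (kappa m a l) (/ jb (a * sqrt l)).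
Proof.
  pose proof one_lt_s. pose proof (one_le_jb (a * sqrt l)).
  rewrite kappa_eq. apply approx_inv; [lra | lra | apply s_approx_jb].
Qed.

Lemma pp_eq : pp m a l = / a ^ 2 * (m / 2 * s).
Proof.
  pose proof one_lt_s. unfold pp. rewrite kappa_eq. pose proof a2_pos.
  field; split; lra.
Qed.

Lemma pp_pos : 0 < pp m a l.
Proof.
  pose proof one_lt_s. rewrite pp_eq.
  apply Rmult_lt_0_compat; [apply Rinv_0_lt_compat, pow_lt | apply Rmult_lt_0_compat]; lra.
Qed.

Lemma pp_approx :
  approx ((m / 2 + / (m / 2)) * (2 + c + / c)) (pp m a l) (/ a ^ 2 * jb (a * sqrt l)).
Proof.
  pose proof one_lt_s. pose proof c_pos.
  rewrite pp_eq. apply approx_scale; [left; apply Rinv_0_lt_compat, pow_lt; lra|].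
  apply approx_trans with s.
  - assert (0 < / (m / 2)) by (apply Rinv_0_lt_compat; lra). lra.
  - assert (0 < / c) by (apply Rinv_0_lt_compat; lra). lra.
  - apply approx_mul_const; lra.
  - apply s_approx_jb.
Qed.

Lemma r0_eq_pp : r0 m a l = pp m a l * (1 - kappa m a l).
Proof.
  pose proof one_lt_s. rewrite pp_eq, kappa_eq. unfold r0. fold s. pose proof a2_pos.
  field; split; lra.
Qed.

Lemma r0_eq : r0 m a l = l * (2 / m * / (s + 1)).
Proof.
  pose proof one_lt_s. unfold r0. fold s.
  apply Rmult_eq_reg_r with (s + 1); [|lra].
  replace (m / (2 * a ^ 2) * (s - 1) * (s + 1)) with (m / (2 * a ^ 2) * (s * s - 1)) by ring.
  rewrite s_sqr. unfold c, u. field. lra.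
Qed.

Lemma r0_approx :
  approx ((2 / m + / (2 / m)) * (2 * (2 + c + / c))) (r0 m a l) (l / jb (a * sqrt l)).
Proof.
  pose proof one_lt_s. pose proof c_pos. pose proof (one_le_jb (a * sqrt l)).
  assert (0 < / c) by (apply Rinv_0_lt_compat; lra).
  assert (0 < 2 / m) by (apply Rdiv_lt_0_compat; lra).
  assert (0 < / (2 / m)) by (apply Rinv_0_lt_compat; lra).
  assert (0 < / (s + 1)) by (apply Rinv_0_lt_compat; lra).
  rewrite r0_eq. apply approx_scale; [lra|].
  apply approx_trans with (/ (s + 1)); [lra | lra | apply approx_mul_const; lra |].
  apply approx_inv; [lra | lra |].
  apply approx_trans with s; [lra | lra | split; lra | apply s_approx_jb].
Qed.

Lemma inv_one_sub_kappa_eq : / (1 - kappa m a l) = / (c * u) * (s * (s + 1)).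
Proof.
  pose proof one_lt_s.
  replace (c * u) with (s * s - 1) by (rewrite s_sqr; ring).
  rewrite kappa_eq. field. split; nra.
Qed.

Lemma inv_one_sub_kappa_approx :
  approx (2 * (2 + c + / c) * 3) (/ (1 - kappa m a l)) (jb (/ (a ^ 2 * l))).
Proof.
  pose proof one_lt_s. pose proof c_pos. pose proof u_pos. pose proof s_sqr as hs.
  assert (0 < / c) by (apply Rinv_0_lt_compat; lra).
  assert (0 < / u) by (apply Rinv_0_lt_compat; lra).
  assert (0 < / (c * u)) by (apply Rinv_0_lt_compat; nra).
  assert (hcu : approx (2 + c + / c) (1 + / c * / u) (2 + / u)).
  { replace (2 + c + / c) with (2 + / c + / / c) by (rewrite Rinv_inv; ring).
    apply approx_one_add_mul; lra. }
  rewrite inv_one_sub_kappa_eq. fold u.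
  apply approx_trans with (2 + / u); [nra | lra | |apply approx_two_add_jb; lra].
  apply approx_trans with (1 + / c * / u); [lra | lra | |exact hcu].
  replace (1 + / c * / u) with (/ (c * u) * (s * s)) by (rewrite hs; field; lra).
  apply approx_scale; [lra|]. split; nra.
Qed.

Lemma kappa_sq_approx :
  approx (1 + c + / c) (a * l * kappa m a l ^ 2) (Rmin (a * l) (/ a)).
Proof.
  pose proof one_lt_s. pose proof c_pos. pose proof u_pos.
  replace (a * l * kappa m a l ^ 2) with (a * l / (1 + c * u))
    by (rewrite kappa_eq, <- s_sqr; field; lra).
  replace (/ a) with (a * l / u) by (unfold u; field; lra).
  apply approx_div_one_add_mul_min; nra.
Qed.

Lemma scales_approx (C : R) : 6 * (2 + m + / m) * (2 + c + / c) <= C ->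
  (0 < kappa m a l < 1) /\
  approx C (r0 m a l) (l / jb (a * sqrt l)) /\
  approx C (kappa m a l) (/ jb (a * sqrt l)) /\
  approx C (pp m a l) (/ a ^ 2 * jb (a * sqrt l)) /\
  approx C (/ (1 - kappa m a l)) (jb (/ (a ^ 2 * l))) /\
  approx C (a * l * kappa m a l ^ 2) (Rmin (a * l) (/ a)).
Proof.
  intros hC.
  pose proof kappa_bounds. pose proof pp_pos. pose proof c_pos.
  pose proof (one_le_jb (a * sqrt l)). pose proof (jb_nonneg (/ (a ^ 2 * l))).
  assert (0 < / c) by (apply Rinv_0_lt_compat; lra).
  assert (0 < / m) by (apply Rinv_0_lt_compat; lra).
  assert (m * / m = 1) by (field; lra).
  set (K := 2 + c + / c) in *.
  assert (hK : 0 < K) by (unfold K; lra).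
  assert (hCK : forall x, 0 <= x <= 6 * (2 + m + / m) -> x * K <= C).
  { intros x hx. apply Rle_trans with (6 * (2 + m + / m) * K); [|exact hC].
    apply Rmult_le_compat_r; lra. }
  split; [assumption|]. split; [|split; [|split; [|split]]].
  - apply (approx_le ((2 / m + / (2 / m)) * (2 * K))); [| | |apply r0_approx].
    + rewrite r0_eq_pp. nra.
    + left; apply Rdiv_lt_0_compat; lra.
    + replace ((2 / m + / (2 / m)) * (2 * K)) with ((4 * / m + m) * K) by (field; lra).
      apply hCK. lra.
  - apply (approx_le K); [lra | | | apply kappa_approx].
    + left; apply Rinv_0_lt_compat; lra.
    + rewrite <- Rmult_1_l at 1. apply hCK. lra.
  - apply (approx_le ((m / 2 + / (m / 2)) * K)); [lra | | |apply pp_approx].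
    + apply Rmult_le_pos; [left; apply Rinv_0_lt_compat, pow_lt|]; lra.
    + replace (m / 2 + / (m / 2)) with (m / 2 + 2 * / m) by (field; lra).
      apply hCK. lra.
  - apply (approx_le (2 * K * 3)); [| | |].
    + left. apply Rinv_0_lt_compat. lra.
    + assumption.
    + replace (2 * K * 3) with (6 * K) by ring. apply hCK. lra.
    + apply inv_one_sub_kappa_approx.
  - apply (approx_le (1 + c + / c)); [| | |apply kappa_sq_approx].
    + apply Rmult_le_pos; [nra | apply pow2_ge_0].
    + apply Rmin_glb; [nra | left; apply Rinv_0_lt_compat; lra].
    + pose proof (hCK 1). unfold K in *. lra.
Qed.

Lemma RR_estimates (theta C : R) : 9 <= C ->
  let Rv := RR m theta a l in
  let p := pp m a l in
  let k := kappa m a l in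
  r0 m a l <= Rv /\ r0 m a l = p * (1 - k) /\
  approx C (Rv / p + k) (jb (Rv / p)) /\
  Rabs (Rv / p + k - Rabs theta / p) <= C * ln (jb (Rv / p)) /\
  Rabs theta <= C * Rv /\
  Rv <= C * (p + Rabs theta).
Proof.
  intros hC Rv p k.
  pose proof kappa_bounds as hk. pose proof pp_pos as hp. fold k in hk. fold p in hp.
  set (y := Rabs theta / p).
  assert (hy : 0 <= y).
  { unfold y, Rdiv. apply Rmult_le_pos; [apply Rabs_pos | left; apply Rinv_0_lt_compat; lra]. }
  destruct (Hk_estimates k y ltac:(lra) hy) as [hx1 [hJ [hln [hyx hx9]]]].
  set (x := Hk k y) in *.
  assert (hRv : Rv = p * (x - k)) by (unfold Rv, RR; fold p k; fold y x; ring).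
  assert (hRvp : Rv / p = x - k) by (rewrite hRv; field; lra).
  assert (hth : Rabs theta = p * y) by (unfold y; field; lra).
  replace (Rv / p + k) with x by lra.
  rewrite hRvp, r0_eq_pp. fold p k.
  pose proof (ln_nonneg _ (one_le_jb (x - k))).
  pose proof (jb_nonneg (x - k)).
  split; [nra|]. split; [reflexivity|]. split; [|split; [|split]].
  - apply (approx_le 2); [lra | lra | lra | exact hJ].
  - nra.
  - assert (p * y <= p * (x - k)) by (apply Rmult_le_compat_l; lra).
    assert (0 <= p * (x - k)) by (apply Rmult_le_pos; lra).
    rewrite hth, hRv. nra.
  - assert (p * (x - k) <= p * (9 * (1 + y))) by (apply Rmult_le_compat_l; lra).
    assert (0 <= p * (1 + y)) by (apply Rmult_le_pos; lra).
    rewrite hth, hRv. nra.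
Qed.

End Scales.

Theorem lemma2p12 (m : R) (hm : 0 < m) :
  exists C : R, 0 < C /\
    (forall a l : R, 0 < a -> 0 < l ->
       (0 < kappa m a l < 1) /\
       approx C (r0 m a l) (l / jb (a * sqrt l)) /\
       approx C (kappa m a l) (/ jb (a * sqrt l)) /\
       approx C (pp m a l) (/ a^2 * jb (a * sqrt l)) /\
       approx C (/ (1 - kappa m a l)) (jb (/ (a^2 * l))) /\
       approx C (a * l * (kappa m a l)^2) (Rmin (a * l) (/ a))) /\
    (forall theta a l : R, 0 < a -> 0 < l ->
       let Rv := RR m theta a l in
       let p := pp m a l in
       let k := kappa m a l in
       r0 m a l <= Rv /\ r0 m a l = p * (1 - k) /\
       approx C (Rv / p + k) (jb (Rv / p)) /\
       Rabs (Rv / p + k - Rabs theta / p) <= C * ln (jb (Rv / p)) /\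
       Rabs theta <= C * Rv /\
       Rv <= C * (p + Rabs theta)).
Proof.
  set (Cm := 6 * (2 + m + / m) * (2 + 4 / m ^ 2 + / (4 / m ^ 2))).
  assert (hCm : 0 <= Cm).
  { assert (0 < / m) by (apply Rinv_0_lt_compat; lra).
    assert (0 < 4 / m ^ 2) by (apply Rdiv_lt_0_compat; [lra | apply pow_lt; lra]).
    assert (0 < / (4 / m ^ 2)) by (apply Rinv_0_lt_compat; lra).
    unfold Cm. nra. }
  exists (Cm + 9). split; [lra|]. split.
  - intros a l ha hl. apply scales_approx; [assumption.. | fold Cm; lra].
  - intros theta a l ha hl. apply RR_estimates; lra.
Qed.
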